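(* Let $\Phi:\mathbb{R}\times(-\epsilon,\epsilon)\to\mathbb{R}^2$ be an orientation-preserving $C^2$ diffeomorphism onto a domain $\Omega\subset\mathbb{R}^2$, and write $\Phi(\sigma;t)=(x(\sigma;t),\,y(\sigma;t))$. For each $t\in(-\epsilon,\epsilon)$ let $\gamma_t$ be the curve $\sigma\mapsto\Phi(\sigma;t)$. Define \[ \varphi=\frac{\det d\Phi}{\|\gamma_t'\|}\quad\text{and}\quad \mathbf{N}=\frac{(-\partial y/\partial\sigma)\,\mathbf{e}_1+(\partial x/\partial\sigma)\,\mathbf{e}_2}{\|\gamma_t'\|}, \] let $s$ be the arc-length parameter (modulo an additive constant) along each integral curve of $\mathbf{N}$, and for $p\in\Omega$ let $\kappa(p)$ be the signed curvature at $p$ of the curve $\gamma_t$ on which $p$ lies, signed in accordance with the normal field $\mathbf{N}$. Then there exists a critical-point-free harmonic function $U$ on $\Omega$ whose family of level curves is $\{\gamma_t\mid t\in(-\epsilon,\epsilon)\}$ if and only if $\frac{\partial\varphi}{\partial s}+\kappa\varphi$ is constant on each curve $\gamma_t$, i.e. \[ \frac{\partial}{\partial\sigma}\left(\frac{\partial\varphi}{\partial s}+\kappa\varphi\right)\equiv 0 . \]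
   Context: Here $\det d\Phi$ is the Jacobian determinant of $\Phi$ at $(\sigma;t)$ and $\|\gamma_t'\|=\|\partial\Phi/\partial\sigma\|$, so $\varphi$ and $\mathbf{N}$ are functions on $\mathbb{R}\times(-\epsilon,\epsilon)$, transported to $\Omega$ via $\Phi$ when needed. Signed curvature: with unit tangent $\mathbf{T}$ of $\gamma_t$ chosen so that $(\mathbf{T},\mathbf{N})$ is a positively oriented frame, $\kappa$ is defined by $d\mathbf{T}/d\ell=\kappa\mathbf{N}$, where $\ell$ is arc length along $\gamma_t$. The quantity $\frac{\partial\varphi}{\partial s}+\kappa\varphi$ is regarded as a function on $\mathbb{R}\times(-\epsilon,\epsilon)$: for $q$ there, $(\kappa\varphi)(q)=\kappa(\Phi(q))\varphi(q)$, and if $\alpha:(-\delta,\delta)\to\Omega$ is the unit-speed integral curve of $\mathbf{N}$ with $\alpha(0)=\Phi(q)$, then $\frac{\partial\varphi}{\partial s}(q)=\frac{d}{ds}\big|_{s=0}\varphi(\Phi^{-1}(\alpha(s)))$. ''Level-curve family $\{\gamma_t\}$'' means the level sets of $U$ in $\Omega$ are exactly the curves $\gamma_t$. *)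

From Stdlib Require Import Reals.
From Coquelicot Require Import Coquelicot.
Open Scope R_scope.

Definition d1 (f : R -> R -> R) : R -> R -> R :=
  fun a b => Derive (fun u => f u b) a.
Definition d2 (f : R -> R -> R) : R -> R -> R :=
  fun a b => Derive (fun v => f a v) b.

Definition C0_on (D : R -> R -> Prop) (f : R -> R -> R) : Prop :=
  forall a b, D a b -> continuous (fun p : R * R => f (fst p) (snd p)) (a, b).

Definition C1_on (D : R -> R -> Prop) (f : R -> R -> R) : Prop :=
  C0_on D f /\
  (forall a b, D a b -> ex_derive (fun u => f u b) a /\ ex_derive (fun v => f a v) b) /\
  C0_on D (d1 f) /\ C0_on D (d2 f).

Definition C2_on (D : R -> R -> Prop) (f : R -> R -> R) : Prop :=
  C1_on D f /\ C1_on D (d1 f) /\ C1_on D (d2 f).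

Definition strip (eps : R) : R -> R -> Prop := fun _ t => -eps < t < eps.

Definition image_Phi (eps : R) (X Y : R -> R -> R) : R -> R -> Prop :=
  fun x y => exists sg t, -eps < t < eps /\ X sg t = x /\ Y sg t = y.

(* (X,Y) is an orientation-preserving C^2 diffeomorphism of the strip onto
   Omega, with C^2 inverse (S,T) : Omega -> strip. *)
Definition orient_C2_diffeo (eps : R) (X Y S T : R -> R -> R) : Prop :=
  C2_on (strip eps) X /\ C2_on (strip eps) Y /\
  C2_on (image_Phi eps X Y) S /\ C2_on (image_Phi eps X Y) T /\
  (forall sg t, strip eps sg t ->
     S (X sg t) (Y sg t) = sg /\ T (X sg t) (Y sg t) = t) /\
  (forall x y, image_Phi eps X Y x y ->
     strip eps (S x y) (T x y) /\
     X (S x y) (T x y) = x /\ Y (S x y) (T x y) = y) /\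
  (forall sg t, strip eps sg t ->
     d1 X sg t * d2 Y sg t - d2 X sg t * d1 Y sg t > 0).

Definition jac (X Y : R -> R -> R) (sg t : R) : R :=
  d1 X sg t * d2 Y sg t - d2 X sg t * d1 Y sg t.

Definition speed (X Y : R -> R -> R) (sg t : R) : R :=
  sqrt (d1 X sg t ^ 2 + d1 Y sg t ^ 2).

Definition varphi (X Y : R -> R -> R) (sg t : R) : R :=
  jac X Y sg t / speed X Y sg t.

Definition N1 (X Y : R -> R -> R) (sg t : R) : R := - d1 Y sg t / speed X Y sg t.
Definition N2 (X Y : R -> R -> R) (sg t : R) : R := d1 X sg t / speed X Y sg t.

Definition T1 (X Y : R -> R -> R) (sg t : R) : R := d1 X sg t / speed X Y sg t.
Definition T2 (X Y : R -> R -> R) (sg t : R) : R := d1 Y sg t / speed X Y sg t.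

(* signed curvature: dT/dl = kappa N with dl = ||gamma_t'|| dsigma, so
   kappa = (dT/dsigma . N) / ||gamma_t'|| *)
Definition kappa (X Y : R -> R -> R) (sg t : R) : R :=
  (Derive (fun u => T1 X Y u t) sg * N1 X Y sg t
   + Derive (fun u => T2 X Y u t) sg * N2 X Y sg t) / speed X Y sg t.

(* d varphi / ds at q = (sigma; t): derivative of varphi o Phi^{-1} along N at
   Phi(q) (= derivative along the unit-speed integral curve of N through Phi(q)) *)
Definition dvarphi_ds (X Y S T : R -> R -> R) (sg t : R) : R :=
  Derive (fun h =>
    let x := X sg t + h * N1 X Y sg t in
    let y := Y sg t + h * N2 X Y sg t in
    varphi X Y (S x y) (T x y)) 0.

Definition harmonic_on (D : R -> R -> Prop) (U : R -> R -> R) : Prop :=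
  C2_on D U /\ (forall x y, D x y -> d1 (d1 U) x y + d2 (d2 U) x y = 0).

Definition no_critical_point_on (D : R -> R -> Prop) (U : R -> R -> R) : Prop :=
  forall x y, D x y -> ~ (d1 U x y = 0 /\ d2 U x y = 0).

(* the family of level sets of U in Omega is exactly {gamma_t(R) | t in (-eps,eps)} *)
Definition level_curves_are (eps : R) (X Y U : R -> R -> R) : Prop :=
  forall A : R -> R -> Prop,
    (exists c, (exists x y, image_Phi eps X Y x y /\ U x y = c) /\
       forall x y, A x y <-> (image_Phi eps X Y x y /\ U x y = c))
    <->
    (exists t, -eps < t < eps /\
       forall x y, A x y <-> exists sg, X sg t = x /\ Y sg t = y).

(* Let [T] be the second component of the inverse of [Phi], so that the curves [gamma_t]
   are the level sets of [T], with [grad T = N / varphi] along them.  A direct computation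
   of the second derivatives of [T] gives
     [Delta T = - (d varphi / ds + kappa varphi) |grad T|^2]     along [gamma_t],
   hence, for [U = h o T],
     [Delta U = |grad T|^2 (h''(t) - h'(t) (d varphi / ds + kappa varphi))].
   A function whose level curves are the [gamma_t] is of the form [h o T], with [h' <> 0]
   when it has no critical point, so if it is harmonic then [d varphi / ds + kappa varphi]
   equals [h''/h'] on [gamma_t].  Conversely, if this quantity only depends on [t], then
   [h' = exp (int (d varphi / ds + kappa varphi))] makes [h o T] harmonic.
   To differentiate on [Omega] we need it to be open; this follows from the fact that
   a map of the plane whose Jacobian matrix stays close to the identity on a square
   has a zero there as soon as its value at the centre is small. *)

From Stdlib Require Import Reals Ranalysis5 Lra.
From Coquelicot Require Import Coquelicot.
Open Scope R_scope.

Lemma is_derive_Rmult (f g : R -> R) x df dg :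
  is_derive f x df -> is_derive g x dg ->
  is_derive (fun y => f y * g y) x (df * g x + f x * dg).
Proof. intros Hf Hg. apply (is_derive_mult f g); auto. intros; apply Rmult_comm. Qed.

Lemma is_derive_Rcomp (f g : R -> R) x df dg :
  is_derive f (g x) df -> is_derive g x dg -> is_derive (fun y => f (g y)) x (df * dg).
Proof. intros Hf Hg. rewrite Rmult_comm. exact (is_derive_comp f g x df dg Hf Hg). Qed.

Lemma is_derive_continuity_pt (f : R -> R) x df : is_derive f x df -> continuity_pt f x.
Proof.
  intros H. apply continuity_pt_filterlim, (ex_derive_continuous f x). exists df; exact H.
Qed.

Lemma is_derive_affine (x n h : R) : is_derive (fun k => x + k * n) h n.
Proof. auto_derive; [exact I | ring]. Qed.

Lemma Rabs_segment_le a b z : Rmin a b <= z <= Rmax a b -> Rabs (z - a) <= Rabs (b - a).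
Proof.
  unfold Rmin, Rmax. destruct (Rle_dec a b); intros [H1 H2];
  unfold Rabs; repeat destruct Rcase_abs; lra.
Qed.

Lemma increment_linear_le (g g' : R -> R) a b L M :
  (forall z, Rmin a b <= z <= Rmax a b -> is_derive g z (g' z)) ->
  (forall z, Rmin a b <= z <= Rmax a b -> Rabs (g' z - L) <= M) ->
  Rabs (g b - g a - L * (b - a)) <= M * Rabs (b - a).
Proof.
  intros Hd HM.
  destruct (MVT_abs (fun z => g z - L * z) (fun z => g' z - L) a b) as (c & E & Hc).
  - intros z Hz. apply is_derive_Reals.
    replace (g' z - L) with (g' z - L * 1) by ring.
    apply (is_derive_minus g (fun u => L * u)); [apply Hd, Hz|].
    apply is_derive_scal, (is_derive_id z).
  - replace (g b - g a - L * (b - a)) with (g b - L * b - (g a - L * a)) by ring.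
    rewrite E. apply Rmult_le_compat_r; [apply Rabs_pos | apply HM, Hc].
Qed.

Lemma is_derive_RInt_interval (g : R -> R) eps t :
  (forall u, -eps < u < eps -> continuity_pt g u) -> -eps < t < eps ->
  is_derive (fun v => RInt g 0 v) t (g t).
Proof.
  intros Hc Ht. apply (is_derive_RInt g _ 0).
  - apply (filter_imp (fun v => -eps < v < eps)).
    + intros v Hv. apply (RInt_correct (V := R_CompleteNormedModule)), ex_RInt_continuous.
      intros z Hz. apply continuity_pt_filterlim, Hc.
      revert Hz. unfold Rmin, Rmax. destruct Rle_dec; lra.
    + apply (open_and _ _ (open_gt _) (open_lt _)). exact Ht.
  - apply continuity_pt_filterlim, Hc, Ht.
Qed.

(* [h' = exp (int g)] and [h = int h']. *)
Lemma exists_increasing_solution (g : R -> R) eps :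
  (forall t, -eps < t < eps -> continuity_pt g t) ->
  exists h h' : R -> R, forall t, -eps < t < eps ->
    is_derive h t (h' t) /\ is_derive h' t (h' t * g t) /\ 0 < h' t.
Proof.
  intros Hg.
  assert (dh' : forall t, -eps < t < eps ->
            is_derive (fun v => exp (RInt g 0 v)) t (exp (RInt g 0 t) * g t)).
  { intros t Ht. apply (is_derive_Rcomp exp (fun v => RInt g 0 v)); [apply is_derive_exp|].
    exact (is_derive_RInt_interval g eps t Hg Ht). }
  exists (fun v => RInt (fun w => exp (RInt g 0 w)) 0 v), (fun v => exp (RInt g 0 v)).
  intros t Ht. split; [|split; [exact (dh' t Ht) | apply exp_pos]].
  apply (is_derive_RInt_interval (fun w => exp (RInt g 0 w)) eps t); [|exact Ht].
  intros u Hu. exact (is_derive_continuity_pt _ _ _ (dh' u Hu)).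
Qed.

Lemma injective_of_derive_pos (h h' : R -> R) eps :
  (forall t, -eps < t < eps -> is_derive h t (h' t) /\ 0 < h' t) ->
  forall a b, -eps < a < eps -> -eps < b < eps -> h a = h b -> a = b.
Proof.
  intros Hh.
  assert (Hlt : forall a b, -eps < a < eps -> -eps < b < eps -> a < b -> h a < h b).
  { intros a b Ha Hb Hab.
    destruct (MVT_gen h a b h') as (c & Hc & E).
    - intros z Hz. apply Hh. revert Hz. unfold Rmin, Rmax. destruct Rle_dec; lra.
    - intros z Hz. apply (is_derive_continuity_pt h z (h' z)), Hh.
      revert Hz. unfold Rmin, Rmax. destruct Rle_dec; lra.
    - assert (0 < h' c) by (apply Hh; revert Hc; unfold Rmin, Rmax; destruct Rle_dec; lra). nra. }
  intros a b Ha Hb E. destruct (Rtotal_order a b) as [L|[L|L]]; auto.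
  - specialize (Hlt a b Ha Hb L). lra.
  - specialize (Hlt b a Hb Ha L). lra.
Qed.

(** * C^1 functions of two variables with given partial derivatives *)

Definition open_2d (D : R -> R -> Prop) : Prop := forall x y, D x y -> locally_2d D x y.

Lemma open_2d_locally D (P : R -> R -> Prop) x y :
  open_2d D -> D x y -> (forall u v, D u v -> P u v) -> locally_2d P x y.
Proof.
  intros HD Hxy HP. apply (locally_2d_impl D); [apply locally_2d_forall, HP | exact (HD x y Hxy)].
Qed.

Lemma strip_open eps : open_2d (strip eps).
Proof.
  intros s t [H1 H2].
  assert (P : 0 < Rmin (eps - t) (t + eps)) by (apply Rmin_pos; lra).
  exists (mkposreal _ P); simpl. intros u v _ Hv. unfold strip.
  assert (Rmin (eps - t) (t + eps) <= eps - t) by apply Rmin_l.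
  assert (Rmin (eps - t) (t + eps) <= t + eps) by apply Rmin_r.
  apply Rabs_def2 in Hv. lra.
Qed.

Lemma d1_eq_of_is_derive F x y l : is_derive (fun u => F u y) x l -> d1 F x y = l.
Proof. exact (is_derive_unique _ _ _). Qed.

Lemma d2_eq_of_is_derive F x y l : is_derive (fun v => F x v) y l -> d2 F x y = l.
Proof. exact (is_derive_unique _ _ _). Qed.

Lemma d1_d2_ext_open D F G : open_2d D -> (forall x y, D x y -> F x y = G x y) ->
  forall x y, D x y -> d1 F x y = d1 G x y /\ d2 F x y = d2 G x y.
Proof.
  intros HD E x y Hxy. assert (Loc := open_2d_locally D _ x y HD Hxy E).
  split; apply Derive_ext_loc;
    [apply (locally_2d_1d_const_y _ _ _ Loc) | apply (locally_2d_1d_const_x _ _ _ Loc)].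
Qed.

Lemma laplacian_ext_open D F G : open_2d D -> (forall x y, D x y -> F x y = G x y) ->
  forall x y, D x y -> d1 (d1 F) x y + d2 (d2 F) x y = d1 (d1 G) x y + d2 (d2 G) x y.
Proof.
  intros HD E x y Hxy. assert (E1 := d1_d2_ext_open D F G HD E).
  f_equal.
  - apply (d1_d2_ext_open D (d1 F) (d1 G) HD); [intros u v Huv; apply E1, Huv | exact Hxy].
  - apply (d1_d2_ext_open D (d2 F) (d2 G) HD); [intros u v Huv; apply E1, Huv | exact Hxy].
Qed.

Lemma continuity_2d_pt_of_C0_on D f x y : C0_on D f -> D x y -> continuity_2d_pt f x y.
Proof. intros Hf Hxy. apply continuity_2d_pt_filterlim, Hf, Hxy. Qed.

Lemma continuity_pt_comp_2d F (g1 g2 : R -> R) t :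
  continuity_2d_pt F (g1 t) (g2 t) -> continuity_pt g1 t -> continuity_pt g2 t ->
  continuity_pt (fun u => F (g1 u) (g2 u)) t.
Proof.
  intros HF H1 H2. apply continuity_pt_filterlim, (continuous_comp_2 g1 g2 F).
  - apply continuity_pt_filterlim, H1.
  - apply continuity_pt_filterlim, H2.
  - apply continuity_2d_pt_filterlim, HF.
Qed.

Lemma Derive_along_line f x y fx fy n1 n2 : differentiable_pt_lim f x y fx fy ->
  Derive (fun h => f (x + h * n1) (y + h * n2)) 0 = fx * n1 + fy * n2.
Proof.
  intros Df. apply is_derive_unique, is_derive_Reals.
  apply derivable_pt_lim_comp_2d; [| apply is_derive_Reals, is_derive_affine ..].
  replace (x + 0 * n1) with x by ring. replace (y + 0 * n2) with y by ring. exact Df.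
Qed.

Definition is_C1_on (D : R -> R -> Prop) (f fx fy : R -> R -> R) : Prop :=
  forall x y, D x y ->
    is_derive (fun u => f u y) x (fx x y) /\ is_derive (fun v => f x v) y (fy x y) /\
    continuity_2d_pt f x y /\ continuity_2d_pt fx x y /\ continuity_2d_pt fy x y.

Definition quotient_partial (f f' g g' : R -> R -> R) x y :=
  (f' x y * g x y - f x y * g' x y) / g x y ^ 2.

Ltac continuity_2d :=
  repeat first [ assumption | apply continuity_2d_pt_plus | apply continuity_2d_pt_minus
               | apply continuity_2d_pt_mult | apply continuity_2d_pt_opp
               | apply continuity_2d_pt_inv | apply continuity_2d_pt_const ].

Ltac split_C1 := refine (conj _ (conj _ (conj _ (conj _ _)))).

Section C1_calculus.
Variable D : R -> R -> Prop.

Lemma is_C1_on_plus f fx fy g gx gy :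
  is_C1_on D f fx fy -> is_C1_on D g gx gy ->
  is_C1_on D (fun x y => f x y + g x y)
    (fun x y => fx x y + gx x y) (fun x y => fy x y + gy x y).
Proof.
  intros Hf Hg x y Hxy.
  destruct (Hf x y Hxy) as (f1 & f2 & f3 & f4 & f5), (Hg x y Hxy) as (g1 & g2 & g3 & g4 & g5).
  split_C1; try continuity_2d.
  - exact (is_derive_plus (fun u => f u y) (fun u => g u y) x _ _ f1 g1).
  - exact (is_derive_plus (fun v => f x v) (fun v => g x v) y _ _ f2 g2).
Qed.

Lemma is_C1_on_minus f fx fy g gx gy :
  is_C1_on D f fx fy -> is_C1_on D g gx gy ->
  is_C1_on D (fun x y => f x y - g x y)
    (fun x y => fx x y - gx x y) (fun x y => fy x y - gy x y).
Proof.
  intros Hf Hg x y Hxy.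
  destruct (Hf x y Hxy) as (f1 & f2 & f3 & f4 & f5), (Hg x y Hxy) as (g1 & g2 & g3 & g4 & g5).
  split_C1; try continuity_2d.
  - exact (is_derive_minus (fun u => f u y) (fun u => g u y) x _ _ f1 g1).
  - exact (is_derive_minus (fun v => f x v) (fun v => g x v) y _ _ f2 g2).
Qed.

Lemma is_C1_on_opp f fx fy :
  is_C1_on D f fx fy ->
  is_C1_on D (fun x y => - f x y) (fun x y => - fx x y) (fun x y => - fy x y).
Proof.
  intros Hf x y Hxy. destruct (Hf x y Hxy) as (f1 & f2 & f3 & f4 & f5).
  split_C1; try continuity_2d.
  - exact (is_derive_opp (fun u => f u y) x _ f1).
  - exact (is_derive_opp (fun v => f x v) y _ f2).
Qed.

Lemma is_C1_on_mult f fx fy g gx gy :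
  is_C1_on D f fx fy -> is_C1_on D g gx gy ->
  is_C1_on D (fun x y => f x y * g x y)
    (fun x y => fx x y * g x y + f x y * gx x y)
    (fun x y => fy x y * g x y + f x y * gy x y).
Proof.
  intros Hf Hg x y Hxy.
  destruct (Hf x y Hxy) as (f1 & f2 & f3 & f4 & f5), (Hg x y Hxy) as (g1 & g2 & g3 & g4 & g5).
  split_C1; try continuity_2d.
  - exact (is_derive_Rmult (fun u => f u y) (fun u => g u y) x _ _ f1 g1).
  - exact (is_derive_Rmult (fun v => f x v) (fun v => g x v) y _ _ f2 g2).
Qed.

Lemma is_C1_on_div f fx fy g gx gy :
  is_C1_on D f fx fy -> is_C1_on D g gx gy -> (forall x y, D x y -> g x y <> 0) ->
  is_C1_on D (fun x y => f x y / g x y)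
    (quotient_partial f fx g gx) (quotient_partial f fy g gy).
Proof.
  intros Hf Hg Hnz x y Hxy.
  destruct (Hf x y Hxy) as (f1 & f2 & f3 & f4 & f5), (Hg x y Hxy) as (g1 & g2 & g3 & g4 & g5).
  assert (Hg0 := Hnz x y Hxy).
  assert (Hg2 : g x y ^ 2 <> 0) by (apply pow_nonzero; exact Hg0).
  unfold quotient_partial, Rdiv; simpl.
  split_C1; try continuity_2d.
  - exact (is_derive_div (fun u => f u y) (fun u => g u y) x _ _ f1 g1 Hg0).
  - exact (is_derive_div (fun v => f x v) (fun v => g x v) y _ _ f2 g2 Hg0).
Qed.

Lemma is_C1_on_sqrt f fx fy :
  is_C1_on D f fx fy -> (forall x y, D x y -> 0 < f x y) ->
  is_C1_on D (fun x y => sqrt (f x y))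
    (fun x y => fx x y / (2 * sqrt (f x y))) (fun x y => fy x y / (2 * sqrt (f x y))).
Proof.
  intros Hf Hpos x y Hxy. destruct (Hf x y Hxy) as (f1 & f2 & f3 & f4 & f5).
  assert (Hp := Hpos x y Hxy).
  assert (Hsqrt : continuity_2d_pt (fun u v => sqrt (f u v)) x y).
  { apply continuity_1d_2d_pt_comp; [apply continuity_pt_sqrt; lra | exact f3]. }
  assert (H2 : 2 * sqrt (f x y) <> 0).
  { apply Rgt_not_eq, Rmult_lt_0_compat; [lra | apply sqrt_lt_R0, Hp]. }
  unfold Rdiv. split_C1; try continuity_2d.
  - exact (is_derive_sqrt (fun u => f u y) x _ f1 Hp).
  - exact (is_derive_sqrt (fun v => f x v) y _ f2 Hp).
Qed.

Lemma is_C1_on_comp (h h' : R -> R) f fx fy :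
  is_C1_on D f fx fy ->
  (forall x y, D x y -> is_derive h (f x y) (h' (f x y)) /\ continuity_pt h' (f x y)) ->
  is_C1_on D (fun x y => h (f x y))
    (fun x y => h' (f x y) * fx x y) (fun x y => h' (f x y) * fy x y).
Proof.
  intros Hf Hh x y Hxy.
  destruct (Hf x y Hxy) as (f1 & f2 & f3 & f4 & f5), (Hh x y Hxy) as [Hd Hc].
  assert (Hhc := is_derive_continuity_pt h _ _ Hd).
  split_C1; try (continuity_2d; apply continuity_1d_2d_pt_comp; assumption).
  - exact (is_derive_Rcomp h (fun u => f u y) x _ _ Hd f1).
  - exact (is_derive_Rcomp h (fun v => f x v) y _ _ Hd f2).
Qed.

Lemma is_C1_on_ext f fx fy g gx gy : open_2d D ->
  (forall x y, D x y -> f x y = g x y /\ fx x y = gx x y /\ fy x y = gy x y) ->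
  is_C1_on D f fx fy -> is_C1_on D g gx gy.
Proof.
  intros HD E Hf x y Hxy. destruct (Hf x y Hxy) as (f1 & f2 & f3 & f4 & f5).
  assert (Ef : locally_2d (fun u v => f u v = g u v) x y)
    by (apply (open_2d_locally D); auto; apply E).
  destruct (E x y Hxy) as (e1 & e2 & e3).
  split_C1.
  - rewrite <- e2. apply (is_derive_ext_loc (fun u => f u y)); [|exact f1].
    exact (locally_2d_1d_const_y _ _ _ Ef).
  - rewrite <- e3. apply (is_derive_ext_loc (fun v => f x v)); [|exact f2].
    exact (locally_2d_1d_const_x _ _ _ Ef).
  - exact (continuity_2d_pt_ext_loc f g x y Ef f3).
  - apply (continuity_2d_pt_ext_loc fx); [|exact f4].
    apply (open_2d_locally D); auto. apply E.
  - apply (continuity_2d_pt_ext_loc fy); [|exact f5].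
    apply (open_2d_locally D); auto. apply E.
Qed.

Lemma is_C1_on_partials f fx fy x y : is_C1_on D f fx fy -> D x y ->
  d1 f x y = fx x y /\ d2 f x y = fy x y.
Proof.
  intros Hf Hxy. destruct (Hf x y Hxy) as (f1 & f2 & _). split; apply is_derive_unique; assumption.
Qed.

Lemma is_C1_on_Derive f fx fy : open_2d D -> is_C1_on D f fx fy -> is_C1_on D f (d1 f) (d2 f).
Proof.
  intros HD Hf. apply (is_C1_on_ext f fx fy); auto.
  intros x y Hxy. destruct (is_C1_on_partials f fx fy x y Hf Hxy) as [-> ->]. auto.
Qed.

Lemma is_C1_on_of_C1_on f : C1_on D f -> is_C1_on D f (d1 f) (d2 f).
Proof.
  intros (H0 & H1 & H2 & H3) x y Hxy. destruct (H1 x y Hxy) as [e1 e2].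
  split_C1; try (apply (continuity_2d_pt_of_C0_on D); assumption).
  - exact (Derive_correct (fun u => f u y) x e1).
  - exact (Derive_correct (fun v => f x v) y e2).
Qed.

Lemma C1_on_of_is_C1_on f fx fy : open_2d D -> is_C1_on D f fx fy -> C1_on D f.
Proof.
  intros HD Hf. assert (Hd := is_C1_on_Derive f fx fy HD Hf).
  split; [|split; [|split]]; try (intros x y Hxy; apply continuity_2d_pt_filterlim, Hd, Hxy).
  intros x y Hxy. destruct (Hd x y Hxy) as (f1 & f2 & _).
  split; eexists; eassumption.
Qed.

Lemma is_C1_on_d1 f : C2_on D f -> is_C1_on D (d1 f) (d1 (d1 f)) (d2 (d1 f)).
Proof. intros (_ & H & _). exact (is_C1_on_of_C1_on _ H). Qed.

Lemma is_C1_on_d2 f : C2_on D f -> is_C1_on D (d2 f) (d1 (d2 f)) (d2 (d2 f)).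
Proof. intros (_ & _ & H). exact (is_C1_on_of_C1_on _ H). Qed.

Lemma is_C1_on_differentiable f fx fy x y :
  open_2d D -> is_C1_on D f fx fy -> D x y ->
  differentiable_pt_lim f x y (fx x y) (fy x y).
Proof.
  intros HD Hf Hxy eps.
  destruct (HD x y Hxy) as [d0 H0].
  destruct (Hf x y Hxy) as (_ & _ & _ & Cx & Cy).
  destruct (Cx (pos_div_2 eps)) as [d1 H1], (Cy (pos_div_2 eps)) as [d2 H2].
  assert (Hd : 0 < Rmin d0 (Rmin d1 d2)) by (repeat apply Rmin_pos; apply cond_pos).
  exists (mkposreal _ Hd); simpl. intros u v Hu Hv.
  assert (m0 := Rmin_l d0 (Rmin d1 d2)).
  assert (m1 := Rle_trans _ _ _ (Rmin_r d0 (Rmin d1 d2)) (Rmin_l d1 d2)).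
  assert (m2 := Rle_trans _ _ _ (Rmin_r d0 (Rmin d1 d2)) (Rmin_r d1 d2)).
  assert (Hx0 : Rabs (x - x) < d0) by (rewrite Rminus_eq_0, Rabs_R0; apply cond_pos).
  assert (Hx2 : Rabs (x - x) < d2) by (rewrite Rminus_eq_0, Rabs_R0; apply cond_pos).
  assert (Bu : Rabs (f u v - f x v - fx x y * (u - x)) <= eps / 2 * Rabs (u - x)).
  { apply (increment_linear_le (fun z => f z v) (fun z => fx z v)); intros z Hz;
      assert (Hzx := Rle_lt_trans _ _ _ (Rabs_segment_le _ _ _ Hz) Hu).
    - apply (Hf z v), H0; lra.
    - apply Rlt_le, H1; lra. }
  assert (Bv : Rabs (f x v - f x y - fy x y * (v - y)) <= eps / 2 * Rabs (v - y)).
  { apply (increment_linear_le (fun z => f x z) (fun z => fy x z)); intros z Hz;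
      assert (Hzy := Rle_lt_trans _ _ _ (Rabs_segment_le _ _ _ Hz) Hv).
    - apply (Hf x z), H0; lra.
    - apply Rlt_le, H2; lra. }
  assert (Mu := Rmax_l (Rabs (u - x)) (Rabs (v - y))).
  assert (Mv := Rmax_r (Rabs (u - x)) (Rabs (v - y))).
  assert (He := cond_pos eps).
  eapply Rle_trans; [|apply Rle_trans with (eps / 2 * Rabs (u - x) + eps / 2 * Rabs (v - y))].
  - replace (f u v - f x y - (fx x y * (u - x) + fy x y * (v - y))) with
      ((f u v - f x v - fx x y * (u - x)) + (f x v - f x y - fy x y * (v - y))) by ring.
    apply Rabs_triang.
  - lra.
  - nra.
Qed.

End C1_calculus.

Section Composition.
Variables (D : R -> R -> Prop) (T : R -> R -> R) (h h' h'' : R -> R).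
Hypothesis HT : C2_on D T.
Hypothesis Hh : forall x y, D x y ->
  is_derive h (T x y) (h' (T x y)) /\ is_derive h' (T x y) (h'' (T x y)).

Let hT := fun x y => h (T x y).

Lemma d1_comp x y : D x y -> d1 hT x y = h' (T x y) * d1 T x y.
Proof.
  intros Hxy. apply d1_eq_of_is_derive, (is_derive_Rcomp h (fun u => T u y)); [apply Hh, Hxy|].
  exact (proj1 (is_C1_on_of_C1_on D T (proj1 HT) x y Hxy)).
Qed.

Lemma d2_comp x y : D x y -> d2 hT x y = h' (T x y) * d2 T x y.
Proof.
  intros Hxy. apply d2_eq_of_is_derive, (is_derive_Rcomp h (fun v => T x v)); [apply Hh, Hxy|].
  exact (proj1 (proj2 (is_C1_on_of_C1_on D T (proj1 HT) x y Hxy))).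
Qed.

Lemma laplacian_comp x y : open_2d D -> D x y ->
  d1 (d1 hT) x y + d2 (d2 hT) x y =
  h'' (T x y) * (d1 T x y ^ 2 + d2 T x y ^ 2) + h' (T x y) * (d1 (d1 T) x y + d2 (d2 T) x y).
Proof.
  intros HD Hxy.
  destruct (is_C1_on_of_C1_on D T (proj1 HT) x y Hxy) as (Tx & Ty & _).
  destruct (is_C1_on_d1 D T HT x y Hxy) as (Txx & _).
  destruct (is_C1_on_d2 D T HT x y Hxy) as (_ & Tyy & _).
  rewrite (proj1 (d1_d2_ext_open D (d1 hT) (fun u v => h' (T u v) * d1 T u v) HD d1_comp x y Hxy)).
  rewrite (proj2 (d1_d2_ext_open D (d2 hT) (fun u v => h' (T u v) * d2 T u v) HD d2_comp x y Hxy)).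
  rewrite (d1_eq_of_is_derive _ x y _
    (is_derive_Rmult (fun u => h' (T u y)) (fun u => d1 T u y) x _ _
       (is_derive_Rcomp h' (fun u => T u y) x _ _ (proj2 (Hh x y Hxy)) Tx) Txx)).
  rewrite (d2_eq_of_is_derive _ x y _
    (is_derive_Rmult (fun v => h' (T x v)) (fun v => d2 T x v) y _ _
       (is_derive_Rcomp h' (fun v => T x v) y _ _ (proj2 (Hh x y Hxy)) Ty) Tyy)).
  ring.
Qed.

Lemma C2_on_comp : open_2d D -> (forall x y, D x y -> continuity_pt h'' (T x y)) -> C2_on D hT.
Proof.
  intros HD Hc. destruct HT as (HT0 & HT1 & HT2).
  assert (CT := is_C1_on_of_C1_on D T HT0).
  assert (Ch' : is_C1_on D (fun x y => h' (T x y))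
                  (fun x y => h'' (T x y) * d1 T x y) (fun x y => h'' (T x y) * d2 T x y)).
  { apply (is_C1_on_comp D h' h'' T _ _ CT).
    intros x y Hxy; split; [apply Hh | apply Hc]; exact Hxy. }
  split; [|split].
  - eapply (C1_on_of_is_C1_on D _ _ _ HD), (is_C1_on_comp D h h' T _ _ CT).
    intros x y Hxy.
    split; [apply Hh, Hxy | apply (is_derive_continuity_pt h' _ (h'' (T x y))), Hh, Hxy].
  - eapply (C1_on_of_is_C1_on D _ _ _ HD).
    eapply (is_C1_on_ext D _ _ _ _ _ _ HD);
      [|exact (is_C1_on_mult D _ _ _ _ _ _ Ch' (is_C1_on_of_C1_on D _ HT1))].
    intros x y Hxy. rewrite d1_comp by exact Hxy. split; [|split]; reflexivity.
  - eapply (C1_on_of_is_C1_on D _ _ _ HD).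
    eapply (is_C1_on_ext D _ _ _ _ _ _ HD);
      [|exact (is_C1_on_mult D _ _ _ _ _ _ Ch' (is_C1_on_of_C1_on D _ HT2))].
    intros x y Hxy. rewrite d2_comp by exact Hxy. split; [|split]; reflexivity.
Qed.

End Composition.

(** * Zeros of maps of the plane close to the identity *)

Definition clamp (a b t : R) : R := Rmax a (Rmin b t).

Lemma clamp_between a b t : a <= b -> a <= clamp a b t <= b.
Proof. intros H. unfold clamp, Rmax, Rmin. repeat destruct Rle_dec; lra. Qed.

Lemma clamp_id a b t : a <= t <= b -> clamp a b t = t.
Proof. intros H. unfold clamp, Rmax, Rmin. repeat destruct Rle_dec; lra. Qed.

Lemma clamp_lipschitz a b u v : a <= b -> Rabs (clamp a b u - clamp a b v) <= Rabs (u - v).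
Proof.
  intros H. unfold clamp, Rmax, Rmin.
  repeat destruct Rle_dec; unfold Rabs; repeat destruct Rcase_abs; lra.
Qed.

Lemma lipschitz_continuity_pt (g : R -> R) K t :
  0 <= K -> (forall u v, Rabs (g u - g v) <= K * Rabs (u - v)) -> continuity_pt g t.
Proof.
  intros HK Hg e He. exists (e / (K + 1)). split; [apply Rdiv_lt_0_compat; lra|].
  intros u [_ Hu]. simpl in *. unfold R_dist in *.
  apply Rle_lt_trans with (K * Rabs (u - t)); [apply Hg|].
  apply Rle_lt_trans with (K * (e / (K + 1))); [apply Rmult_le_compat_l; lra|].
  apply (Rmult_lt_reg_r (K + 1)); [lra|]. field_simplify; lra.
Qed.

Section Near_identity.
Variables (A B A1 A2 B1 B2 : R -> R -> R) (s0 t0 r : R).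
Hypothesis Hr : 0 < r.
Let box u v := Rabs (u - s0) <= r /\ Rabs (v - t0) <= r.
Hypothesis HA : forall u v, box u v ->
  is_derive (fun w => A w v) u (A1 u v) /\ is_derive (fun w => A u w) v (A2 u v).
Hypothesis HB : forall u v, box u v ->
  is_derive (fun w => B w v) u (B1 u v) /\ is_derive (fun w => B u w) v (B2 u v).
Hypothesis Hnear : forall u v, box u v ->
  Rabs (A1 u v - 1) <= 1 / 4 /\ Rabs (A2 u v) <= 1 / 4 /\
  Rabs (B1 u v) <= 1 / 4 /\ Rabs (B2 u v - 1) <= 1 / 4.
Hypothesis HA0 : Rabs (A s0 t0) < r / 4.
Hypothesis HB0 : Rabs (B s0 t0) < r / 4.

Lemma increment_in_interval (g g' : R -> R) c a b L :
  Rabs (a - c) <= r -> Rabs (b - c) <= r ->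
  (forall z, Rabs (z - c) <= r -> is_derive g z (g' z) /\ Rabs (g' z - L) <= 1 / 4) ->
  Rabs (g b - g a - L * (b - a)) <= 1 / 4 * Rabs (b - a).
Proof.
  intros Ha Hb Hg.
  assert (Hz : forall z, Rmin a b <= z <= Rmax a b -> Rabs (z - c) <= r).
  { intros z. apply Rabs_le_between in Ha, Hb. rewrite Rabs_le_between.
    unfold Rmin, Rmax. destruct Rle_dec; lra. }
  apply (increment_linear_le g g'); intros z Hzab; apply Hg, Hz, Hzab.
Qed.

Lemma A_increment_u u1 u2 v : box u1 v -> box u2 v ->
  Rabs (A u2 v - A u1 v - 1 * (u2 - u1)) <= 1 / 4 * Rabs (u2 - u1).
Proof.
  intros [H1 Hv] [H2 _]. apply (increment_in_interval (fun w => A w v) (fun w => A1 w v) s0); auto.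
  intros z Hz. split; [apply HA | apply Hnear]; split; auto.
Qed.

Lemma A_increment_v u v1 v2 : box u v1 -> box u v2 ->
  Rabs (A u v2 - A u v1) <= 1 / 4 * Rabs (v2 - v1).
Proof.
  intros [Hu H1] [_ H2]. rewrite <- (Rminus_0_r (A u v2 - A u v1)), <- (Rmult_0_l (v2 - v1)).
  apply (increment_in_interval (fun w => A u w) (fun w => A2 u w) t0); auto.
  intros z Hz. rewrite Rminus_0_r. split; [apply HA | apply Hnear]; split; auto.
Qed.

Lemma B_increment_u u1 u2 v : box u1 v -> box u2 v ->
  Rabs (B u2 v - B u1 v) <= 1 / 4 * Rabs (u2 - u1).
Proof.
  intros [H1 Hv] [H2 _]. rewrite <- (Rminus_0_r (B u2 v - B u1 v)), <- (Rmult_0_l (u2 - u1)).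
  apply (increment_in_interval (fun w => B w v) (fun w => B1 w v) s0); auto.
  intros z Hz. rewrite Rminus_0_r. split; [apply HB | apply Hnear]; split; auto.
Qed.

Lemma B_increment_v u v1 v2 : box u v1 -> box u v2 ->
  Rabs (B u v2 - B u v1 - 1 * (v2 - v1)) <= 1 / 4 * Rabs (v2 - v1).
Proof.
  intros [Hu H1] [_ H2]. apply (increment_in_interval (fun w => B u w) (fun w => B2 u w) t0); auto.
  intros z Hz. split; [apply HB | apply Hnear]; split; auto.
Qed.

Lemma box_edges c : Rabs (c - c) <= r /\ Rabs (c + r - c) <= r /\ Rabs (c - r - c) <= r.
Proof.
  replace (c - c) with 0 by ring. replace (c + r - c) with r by ring.
  replace (c - r - c) with (- r) by ring. rewrite Rabs_R0, Rabs_Ropp, Rabs_pos_eq; lra.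
Qed.

Lemma A_zero_on_row v : Rabs (v - t0) <= r -> {s | Rabs (s - s0) <= r /\ A s v = 0}.
Proof.
  intros Hv. destruct (box_edges s0) as (Hs0 & Hsr & Hsl). destruct (box_edges t0) as (Ht0 & _).
  assert (E1 := A_increment_u s0 (s0 + r) v (conj Hs0 Hv) (conj Hsr Hv)).
  assert (E2 := A_increment_u (s0 - r) s0 v (conj Hsl Hv) (conj Hs0 Hv)).
  assert (E3 := A_increment_v s0 t0 v (conj Hs0 Ht0) (conj Hs0 Hv)).
  replace (s0 + r - s0) with r in E1 by ring. replace (s0 - (s0 - r)) with r in E2 by ring.
  rewrite (Rabs_pos_eq r) in E1, E2 by lra.
  apply Rabs_le_between in E1, E2, E3. apply Rabs_def2 in HA0.
  destruct (IVT_interv (fun u => A u v) (s0 - r) (s0 + r)) as [s [Hs Zs]].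
  - intros u Hu. apply (is_derive_continuity_pt _ _ (A1 u v)), HA.
    split; [apply Rabs_le_between; lra | exact Hv].
  - lra.
  - simpl. lra.
  - simpl. lra.
  - exists s. split; [apply Rabs_le_between; lra | exact Zs].
Qed.

Lemma A_zeros_lipschitz s1 v1 s2 v2 : box s1 v1 -> box s2 v2 -> A s1 v1 = 0 -> A s2 v2 = 0 ->
  Rabs (s1 - s2) <= 1 / 3 * Rabs (v1 - v2).
Proof.
  intros [H1 Hv1] [H2 Hv2] Z1 Z2.
  assert (E1 := A_increment_u s2 s1 v2 (conj H2 Hv2) (conj H1 Hv2)).
  assert (E2 := A_increment_v s1 v1 v2 (conj H1 Hv1) (conj H1 Hv2)).
  rewrite Z2, Rminus_0_r, Rmult_1_l in E1. rewrite Z1, Rminus_0_r in E2.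
  assert (E3 := Rabs_triang_inv (s1 - s2) (A s1 v2)).
  rewrite (Rabs_minus_sym (s1 - s2)) in E3. rewrite (Rabs_minus_sym v2 v1) in E2. lra.
Qed.

Lemma B_lipschitz_on_zeros s1 v1 s2 v2 : box s1 v1 -> box s2 v2 -> A s1 v1 = 0 -> A s2 v2 = 0 ->
  Rabs (B s1 v1 - B s2 v2) <= 2 * Rabs (v1 - v2).
Proof.
  intros [H1 Hv1] [H2 Hv2] Z1 Z2.
  assert (E1 := B_increment_u s2 s1 v1 (conj H2 Hv1) (conj H1 Hv1)).
  assert (E2 := B_increment_v s2 v2 v1 (conj H2 Hv2) (conj H2 Hv1)).
  assert (E3 := A_zeros_lipschitz _ _ _ _ (conj H1 Hv1) (conj H2 Hv2) Z1 Z2).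
  rewrite Rmult_1_l in E2.
  assert (E4 := Rabs_triang_inv (B s2 v1 - B s2 v2) (v1 - v2)).
  assert (E5 := Rabs_triang (B s1 v1 - B s2 v1) (B s2 v1 - B s2 v2)).
  replace (B s1 v1 - B s2 v1 + (B s2 v1 - B s2 v2)) with (B s1 v1 - B s2 v2) in E5 by ring.
  pose proof (Rabs_pos (v1 - v2)). lra.
Qed.

Lemma B_on_horizontal_edges s v : Rabs (s - s0) <= r -> Rabs (v - t0) = r ->
  Rabs (B s v - B s0 t0 - (v - t0)) <= r / 2.
Proof.
  intros Hs Hv. destruct (box_edges s0) as (Hs0 & _). destruct (box_edges t0) as (Ht0 & _).
  assert (E1 := B_increment_v s t0 v (conj Hs Ht0) (conj Hs (Req_le _ _ Hv))).
  assert (E2 := B_increment_u s0 s t0 (conj Hs0 Ht0) (conj Hs Ht0)).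
  rewrite Rmult_1_l, Hv in E1.
  assert (E3 := Rabs_triang (B s v - B s t0 - (v - t0)) (B s t0 - B s0 t0)).
  replace (B s v - B s t0 - (v - t0) + (B s t0 - B s0 t0)) with (B s v - B s0 t0 - (v - t0)) in E3
    by ring.
  lra.
Qed.

(* [IVT_interv] needs continuity at the end points, so the zero of [A] on the row of height
   [v] is followed along the clamped height. *)
Lemma near_identity_has_zero : exists u v, box u v /\ A u v = 0 /\ B u v = 0.
Proof.
  set (cl := clamp (t0 - r) (t0 + r)).
  assert (Hcl : forall v, Rabs (cl v - t0) <= r).
  { intros v. apply Rabs_le_between.
    pose proof (clamp_between (t0 - r) (t0 + r) v). unfold cl. lra. }
  set (sv := fun v => proj1_sig (A_zero_on_row (cl v) (Hcl v))).
  assert (Hsv : forall v, Rabs (sv v - s0) <= r /\ A (sv v) (cl v) = 0)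
    by (intros v; exact (proj2_sig (A_zero_on_row (cl v) (Hcl v)))).
  set (F := fun v => B (sv v) (cl v)).
  assert (F_lip : forall v w, Rabs (F v - F w) <= 2 * Rabs (v - w)).
  { intros v w. destruct (Hsv v) as [H1 Z1], (Hsv w) as [H2 Z2].
    eapply Rle_trans;
      [exact (B_lipschitz_on_zeros _ _ _ _ (conj H1 (Hcl v)) (conj H2 (Hcl w)) Z1 Z2)|].
    apply Rmult_le_compat_l; [lra | apply clamp_lipschitz; lra]. }
  assert (F_edge : forall v, Rabs (v - t0) = r -> Rabs (F v - B s0 t0 - (v - t0)) <= r / 2).
  { intros v Hv. unfold F. replace (cl v) with v; [apply B_on_horizontal_edges, Hv; apply Hsv|].
    symmetry. apply clamp_id. assert (Rabs (v - t0) <= r) by lra. apply Rabs_le_between in H. lra. }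
  apply Rabs_def2 in HB0.
  destruct (IVT_interv F (t0 - r) (t0 + r)) as [v [Hv Zv]].
  - intros v _. apply (lipschitz_continuity_pt F 2); [lra | exact F_lip].
  - lra.
  - assert (E := F_edge (t0 - r) ltac:(replace (t0 - r - t0) with (- r) by ring;
                                         rewrite Rabs_Ropp; apply Rabs_pos_eq; lra)).
    apply Rabs_le_between in E. lra.
  - assert (E := F_edge (t0 + r) ltac:(replace (t0 + r - t0) with r by ring;
                                         apply Rabs_pos_eq; lra)).
    apply Rabs_le_between in E. lra.
  - assert (Ecl : cl v = v) by (apply clamp_id; lra).
    destruct (Hsv v) as [Hu Zu]. unfold F in Zv. rewrite Ecl in Zu, Zv.
    exists (sv v), v. repeat split; auto. apply Rabs_le_between; lra.
Qed.

End Near_identity.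

Lemma Rabs_lincomb_div_lt k1 k2 e1 e2 J K rho :
  0 < J -> 0 <= K -> 0 < rho -> Rabs k1 + Rabs k2 <= K ->
  Rabs e1 <= rho * J / (4 * (K + 1)) -> Rabs e2 <= rho * J / (4 * (K + 1)) ->
  Rabs ((k1 * e1 + k2 * e2) / J) < rho / 4.
Proof.
  intros HJ HK Hrho Hk H1 H2. set (e := rho * J / (4 * (K + 1))) in *.
  assert (He : 0 <= e) by (eapply Rle_trans; [apply Rabs_pos | exact H1]).
  unfold Rdiv. rewrite Rabs_mult, (Rabs_pos_eq (/ J)) by (apply Rlt_le, Rinv_0_lt_compat, HJ).
  apply Rle_lt_trans with (K * e * / J).
  - apply Rmult_le_compat_r; [apply Rlt_le, Rinv_0_lt_compat, HJ|].
    eapply Rle_trans; [apply Rabs_triang|]. rewrite !Rabs_mult.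
    pose proof (Rabs_pos k1). pose proof (Rabs_pos k2). nra.
  - assert (E : K * e * / J = rho / 4 - rho / (4 * (K + 1))) by (unfold e; field; lra).
    assert (0 < rho / (4 * (K + 1))) by (apply Rdiv_lt_0_compat; lra). lra.
Qed.

(* The four expressions are the entries of [M^-1 M'] for [M = [[a b] [c d]]] and
   [M' = [[p1 p2] [q1 q2]]]. *)
Lemma inverse_perturbation_near_identity a b c d p1 p2 q1 q2 :
  let J := a * d - b * c in let K := Rabs a + Rabs b + Rabs c + Rabs d in
  let e := J / (4 * (K + 1)) in
  0 < J -> Rabs (p1 - a) < e -> Rabs (p2 - b) < e -> Rabs (q1 - c) < e -> Rabs (q2 - d) < e ->
  Rabs ((d * p1 + - b * q1) / J - 1) <= 1 / 4 /\ Rabs ((d * p2 + - b * q2) / J) <= 1 / 4 /\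
  Rabs ((- c * p1 + a * q1) / J) <= 1 / 4 /\ Rabs ((- c * p2 + a * q2) / J - 1) <= 1 / 4.
Proof.
  intros J K e HJ Ha Hb Hc Hd.
  assert (HK : 0 <= K) by (unfold K; pose proof (Rabs_pos a); pose proof (Rabs_pos b);
                             pose proof (Rabs_pos c); pose proof (Rabs_pos d); lra).
  assert (Small : forall k1 k2 e1 e2, Rabs k1 + Rabs k2 <= K -> Rabs e1 < e -> Rabs e2 < e ->
            Rabs ((k1 * e1 + k2 * e2) / J) <= 1 / 4).
  { intros k1 k2 e1 e2 Hk H1 H2. apply Rlt_le.
    replace (1 / 4) with (1 / 4 * 1) by ring. replace (1 / 4 * 1) with (1 / 4) by ring.
    apply (Rabs_lincomb_div_lt k1 k2 e1 e2 J K 1); try lra; unfold e in *; lra. }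
  assert (Hdb : Rabs d + Rabs (- b) <= K) by (rewrite Rabs_Ropp; unfold K;
     pose proof (Rabs_pos a); pose proof (Rabs_pos c); lra).
  assert (Hca : Rabs (- c) + Rabs a <= K) by (rewrite Rabs_Ropp; unfold K;
     pose proof (Rabs_pos b); pose proof (Rabs_pos d); lra).
  assert (HJ0 : J <> 0) by lra.
  split; [|split; [|split]].
  - replace ((d * p1 + - b * q1) / J - 1) with ((d * (p1 - a) + - b * (q1 - c)) / J)
      by (unfold J in *; field; exact HJ0). apply Small; assumption.
  - replace ((d * p2 + - b * q2) / J) with ((d * (p2 - b) + - b * (q2 - d)) / J)
      by (unfold J in *; field; exact HJ0). apply Small; assumption.
  - replace ((- c * p1 + a * q1) / J) with ((- c * (p1 - a) + a * (q1 - c)) / J)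
      by (unfold J in *; field; exact HJ0). apply Small; assumption.
  - replace ((- c * p2 + a * q2) / J - 1) with ((- c * (p2 - b) + a * (q2 - d)) / J)
      by (unfold J in *; field; exact HJ0). apply Small; assumption.
Qed.

Lemma is_derive_lincomb (f g : R -> R) z f' g' k1 k2 p q J :
  is_derive f z f' -> is_derive g z g' ->
  is_derive (fun w => (k1 * (f w - p) + k2 * (g w - q)) / J) z ((k1 * f' + k2 * g') / J).
Proof.
  intros Hf Hg.
  assert (H := is_derive_plus _ _ z _ _
    (is_derive_scal _ z k1 _ (is_derive_minus f (fun _ => p) z _ _ Hf (is_derive_const p z)))
    (is_derive_scal _ z k2 _ (is_derive_minus g (fun _ => q) z _ _ Hg (is_derive_const q z)))).
  assert (H' := is_derive_scal _ z (/ J) _ H). simpl in H'.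
  unfold Rdiv. apply (is_derive_ext (fun w => / J * (k1 * (f w - p) + k2 * (g w - q)))).
  - intros w. apply Rmult_comm.
  - replace ((k1 * f' + k2 * g') * / J) with (/ J * (k1 * (f' - 0) + k2 * (g' - 0))) by ring.
    exact H'.
Qed.

(** * Level curves of an orientation-preserving diffeomorphism *)

Lemma Cramer_2x2 a b c d p q e1 e2 :
  p * a + q * c = e1 -> p * b + q * d = e2 -> a * d - b * c <> 0 ->
  p = (e1 * d - e2 * c) / (a * d - b * c) /\ q = (a * e2 - b * e1) / (a * d - b * c).
Proof.
  intros H1 H2 HJ. subst e1 e2. split; field; exact HJ.
Qed.

Lemma sum_sq_pos_of_det_pos a b c d : 0 < a * d - b * c -> 0 < a ^ 2 + c ^ 2.
Proof.
  intros H. destruct (Req_dec a 0) as [Ha|Ha].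
  - subst a. assert (c <> 0) by (intros ->; lra).
    assert (0 < c ^ 2) by (apply pow2_gt_0; assumption). lra.
  - assert (0 < a ^ 2) by (apply pow2_gt_0; assumption). pose proof (pow2_ge_0 c). lra.
Qed.

Lemma level_curves_constant eps X Y U : level_curves_are eps X Y U ->
  forall t, -eps < t < eps -> forall s, U (X s t) (Y s t) = U (X 0 t) (Y 0 t).
Proof.
  intros Hlev t Ht s.
  destruct (proj2 (Hlev (fun x y => exists s, X s t = x /\ Y s t = y))) as (c & _ & HA).
  { exists t. split; [exact Ht | tauto]. }
  destruct (proj1 (HA (X s t) (Y s t)) (ex_intro _ s (conj eq_refl eq_refl))) as [_ ->].
  destruct (proj1 (HA (X 0 t) (Y 0 t)) (ex_intro _ 0 (conj eq_refl eq_refl))) as [_ ->].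
  reflexivity.
Qed.

Definition inv_jac11 (X Y : R -> R -> R) s t := d2 Y s t / jac X Y s t.
Definition inv_jac12 (X Y : R -> R -> R) s t := - d2 X s t / jac X Y s t.
Definition inv_jac21 (X Y : R -> R -> R) s t := - d1 Y s t / jac X Y s t.
Definition inv_jac22 (X Y : R -> R -> R) s t := d1 X s t / jac X Y s t.

Definition speed_d1 (X Y : R -> R -> R) s t :=
  (d1 X s t * d1 (d1 X) s t + d1 Y s t * d1 (d1 Y) s t) / speed X Y s t.
Definition speed_d2 (X Y : R -> R -> R) s t :=
  (d1 X s t * d2 (d1 X) s t + d1 Y s t * d2 (d1 Y) s t) / speed X Y s t.

Definition laplace_ratio (T : R -> R -> R) x y :=
  - (d1 (d1 T) x y + d2 (d2 T) x y) / (d1 T x y ^ 2 + d2 T x y ^ 2).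

Definition curvature_term (X Y S T : R -> R -> R) s t :=
  dvarphi_ds X Y S T s t + kappa X Y s t * varphi X Y s t.

Section Diffeomorphism.
Variables (eps : R) (X Y S T : R -> R -> R).
Hypothesis HX : C2_on (strip eps) X.
Hypothesis HY : C2_on (strip eps) Y.
Hypothesis HS : C2_on (image_Phi eps X Y) S.
Hypothesis HT : C2_on (image_Phi eps X Y) T.
Hypothesis HST_Phi : forall s t, strip eps s t -> S (X s t) (Y s t) = s /\ T (X s t) (Y s t) = t.
Hypothesis HPhi_ST : forall x y, image_Phi eps X Y x y ->
  strip eps (S x y) (T x y) /\ X (S x y) (T x y) = x /\ Y (S x y) (T x y) = y.
Hypothesis Hjac : forall s t, strip eps s t -> 0 < jac X Y s t.

Local Notation Strip := (strip eps).
Local Notation Omega := (image_Phi eps X Y).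

Lemma Omega_Phi s t : Strip s t -> Omega (X s t) (Y s t).
Proof. intros Hst. exists s, t. split; [exact Hst | split; reflexivity]. Qed.

Lemma partials_close s0 t0 e : Strip s0 t0 -> 0 < e ->
  locally_2d (fun u v => Strip u v /\
    Rabs (d1 X u v - d1 X s0 t0) < e /\ Rabs (d2 X u v - d2 X s0 t0) < e /\
    Rabs (d1 Y u v - d1 Y s0 t0) < e /\ Rabs (d2 Y u v - d2 Y s0 t0) < e) s0 t0.
Proof.
  intros Hst He.
  destruct (is_C1_on_of_C1_on _ _ (proj1 HX) s0 t0 Hst) as (_ & _ & _ & CXs & CXt).
  destruct (is_C1_on_of_C1_on _ _ (proj1 HY) s0 t0 Hst) as (_ & _ & _ & CYs & CYt).
  apply (locally_2d_and _ _ _ _ (strip_open eps s0 t0 Hst)).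
  apply (locally_2d_and _ _ _ _ (CXs (mkposreal e He))).
  apply (locally_2d_and _ _ _ _ (CXt (mkposreal e He))).
  exact (locally_2d_and _ _ _ _ (CYs (mkposreal e He)) (CYt (mkposreal e He))).
Qed.

(* Near [Phi (s0, t0)], the inverse of the Jacobian matrix at [(s0, t0)] turns
   [Phi - (x', y')] into a map to which [near_identity_has_zero] applies. *)
Lemma Omega_open : open_2d Omega.
Proof.
  intros x0 y0 (s0 & t0 & Ht0 & Ex & Ey).
  assert (Hst : Strip s0 t0) by exact Ht0.
  assert (HJ := Hjac s0 t0 Hst). unfold jac in HJ.
  set (a := d1 X s0 t0) in *. set (b := d2 X s0 t0) in *.
  set (c := d1 Y s0 t0) in *. set (d := d2 Y s0 t0) in *.
  set (J := a * d - b * c) in *. set (K := Rabs a + Rabs b + Rabs c + Rabs d).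
  assert (HK : 0 <= K) by (unfold K; pose proof (Rabs_pos a); pose proof (Rabs_pos b);
                             pose proof (Rabs_pos c); pose proof (Rabs_pos d); lra).
  assert (He : 0 < J / (4 * (K + 1))) by (apply Rdiv_lt_0_compat; lra).
  destruct (partials_close s0 t0 _ Hst He) as [d0 Hd0].
  set (r := d0 / 2).
  assert (Hr : 0 < r) by (unfold r; pose proof (cond_pos d0); lra).
  assert (Hrd : r < d0) by (unfold r; pose proof (cond_pos d0); lra).
  assert (Box := fun u v (Hu : Rabs (u - s0) <= r) (Hv : Rabs (v - t0) <= r) =>
                   Hd0 u v (Rle_lt_trans _ _ _ Hu Hrd) (Rle_lt_trans _ _ _ Hv Hrd)).
  assert (Hdel : 0 < r * J / (4 * (K + 1)))
    by (apply Rdiv_lt_0_compat; [apply Rmult_lt_0_compat|]; lra).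
  exists (mkposreal _ Hdel); simpl. intros x' y' Hx' Hy'.
  rewrite Rabs_minus_sym in Hx', Hy'.
  set (A := fun u v => (d * (X u v - x') + - b * (Y u v - y')) / J).
  set (B := fun u v => (- c * (X u v - x') + a * (Y u v - y')) / J).
  destruct (near_identity_has_zero A B
    (fun u v => (d * d1 X u v + - b * d1 Y u v) / J)
    (fun u v => (d * d2 X u v + - b * d2 Y u v) / J)
    (fun u v => (- c * d1 X u v + a * d1 Y u v) / J)
    (fun u v => (- c * d2 X u v + a * d2 Y u v) / J)
    s0 t0 r Hr) as (u & v & Huv & ZA & ZB).
  1, 2: intros u v [Hu Hv]; destruct (Box u v Hu Hv) as [Huv _];
    destruct (is_C1_on_of_C1_on _ _ (proj1 HX) u v Huv) as (Xs & Xt & _);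
    destruct (is_C1_on_of_C1_on _ _ (proj1 HY) u v Huv) as (Ys & Yt & _);
    split; apply is_derive_lincomb; assumption.
  - intros u v [Hu Hv]. destruct (Box u v Hu Hv) as (_ & Ha & Hb & Hc & Hd).
    exact (inverse_perturbation_near_identity a b c d _ _ _ _ HJ Ha Hb Hc Hd).
  - unfold A. rewrite Ex, Ey. apply (Rabs_lincomb_div_lt _ _ _ _ J K r); try lra.
    rewrite Rabs_Ropp; unfold K; pose proof (Rabs_pos a); pose proof (Rabs_pos c); lra.
  - unfold B. rewrite Ex, Ey. apply (Rabs_lincomb_div_lt _ _ _ _ J K r); try lra.
    rewrite Rabs_Ropp; unfold K; pose proof (Rabs_pos b); pose proof (Rabs_pos d); lra.
  - exists u, v. split; [apply (Box u v); apply Huv|].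
    assert (HJ0 : J <> 0) by lra.
    replace x' with (X u v - (a * A u v + b * B u v)) by (unfold A, B, J; field; exact HJ0).
    replace y' with (Y u v - (c * A u v + d * B u v)) by (unfold A, B, J; field; exact HJ0).
    rewrite ZA, ZB. split; ring.
Qed.


Lemma jac_neq0 s t : Strip s t -> jac X Y s t <> 0.
Proof. intros Hst. apply Rgt_not_eq, Hjac, Hst. Qed.

Lemma speed_pos s t : Strip s t -> 0 < speed X Y s t.
Proof.
  intros Hst. apply sqrt_lt_R0, (sum_sq_pos_of_det_pos _ (d2 X s t) _ (d2 Y s t)), Hjac, Hst.
Qed.

Lemma is_derive_along_Phi F Fx Fy s t : is_C1_on Omega F Fx Fy -> Strip s t ->
  let x := X s t in let y := Y s t in
  is_derive (fun u => F (X u t) (Y u t)) s (Fx x y * d1 X s t + Fy x y * d1 Y s t) /\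
  is_derive (fun v => F (X s v) (Y s v)) t (Fx x y * d2 X s t + Fy x y * d2 Y s t).
Proof.
  intros HF Hst x y.
  assert (DF := is_C1_on_differentiable Omega F Fx Fy x y Omega_open HF (Omega_Phi s t Hst)).
  destruct (is_C1_on_of_C1_on _ _ (proj1 HX) s t Hst) as (Xs & Xt & _).
  destruct (is_C1_on_of_C1_on _ _ (proj1 HY) s t Hst) as (Ys & Yt & _).
  split; apply is_derive_Reals, derivable_pt_lim_comp_2d; try exact DF;
    apply is_derive_Reals; assumption.
Qed.

Lemma inverse_partials s t : Strip s t ->
  let x := X s t in let y := Y s t in
  d1 S x y = inv_jac11 X Y s t /\ d2 S x y = inv_jac12 X Y s t /\
  d1 T x y = inv_jac21 X Y s t /\ d2 T x y = inv_jac22 X Y s t.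
Proof.
  intros Hst; cbv zeta.
  destruct (is_derive_along_Phi S _ _ s t (is_C1_on_of_C1_on _ _ (proj1 HS)) Hst) as [Ss St].
  destruct (is_derive_along_Phi T _ _ s t (is_C1_on_of_C1_on _ _ (proj1 HT)) Hst) as [Ts Tt].
  assert (LocS : locally s (fun u => S (X u t) (Y u t) = u)).
  { apply filter_forall. intros u. apply HST_Phi, Hst. }
  assert (LocT : locally t (fun v => S (X s v) (Y s v) = s /\ T (X s v) (Y s v) = v)).
  { destruct Hst as [H1 H2].
    apply (filter_imp (fun v => -eps < v < eps)); [intros v Hv; apply HST_Phi, Hv|].
    apply (open_and _ _ (open_gt _) (open_lt _)); split; assumption. }
  assert (E1 := is_derive_unique _ _ _ (is_derive_ext_loc _ (fun u => u) s _ LocS Ss)).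
  assert (E2 := is_derive_unique _ _ _ (is_derive_ext_loc _ (fun _ => s) t _
                  (filter_imp _ _ (fun v H => proj1 H) LocT) St)).
  assert (E3 := is_derive_unique _ _ _ (is_derive_ext_loc _ (fun _ => t) s _
                  (filter_forall _ (fun u => proj2 (HST_Phi u t Hst))) Ts)).
  assert (E4 := is_derive_unique _ _ _ (is_derive_ext_loc _ (fun v => v) t _
                  (filter_imp _ _ (fun v H => proj2 H) LocT) Tt)).
  rewrite Derive_id in E1, E4. rewrite Derive_const in E2, E3.
  destruct (Cramer_2x2 _ _ _ _ _ _ _ _ (eq_sym E1) (eq_sym E2) (jac_neq0 s t Hst)) as [-> ->].
  destruct (Cramer_2x2 _ _ _ _ _ _ _ _ (eq_sym E3) (eq_sym E4) (jac_neq0 s t Hst)) as [-> ->].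
  unfold inv_jac11, inv_jac12, inv_jac21, inv_jac22, jac.
  repeat split; field; exact (jac_neq0 s t Hst).
Qed.

Lemma pullback_differentiable F s t : C1_on Strip F -> Strip s t ->
  differentiable_pt_lim (fun x y => F (S x y) (T x y)) (X s t) (Y s t)
    (d1 F s t * inv_jac11 X Y s t + d2 F s t * inv_jac21 X Y s t)
    (d1 F s t * inv_jac12 X Y s t + d2 F s t * inv_jac22 X Y s t).
Proof.
  intros HF Hst. destruct (HST_Phi s t Hst) as [ES ET].
  destruct (inverse_partials s t Hst) as (E11 & E12 & E21 & E22).
  rewrite <- E11, <- E12, <- E21, <- E22.
  apply differentiable_pt_lim_comp.
  - rewrite ES, ET.
    exact (is_C1_on_differentiable _ _ _ _ s t (strip_open eps) (is_C1_on_of_C1_on _ _ HF) Hst).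
  - exact (is_C1_on_differentiable _ _ _ _ _ _ Omega_open (is_C1_on_of_C1_on _ _ (proj1 HS))
             (Omega_Phi s t Hst)).
  - exact (is_C1_on_differentiable _ _ _ _ _ _ Omega_open (is_C1_on_of_C1_on _ _ (proj1 HT))
             (Omega_Phi s t Hst)).
Qed.

Lemma grad_T_Omega x y : Omega x y ->
  d1 T x y = inv_jac21 X Y (S x y) (T x y) /\ d2 T x y = inv_jac22 X Y (S x y) (T x y).
Proof.
  intros Hxy. destruct (HPhi_ST x y Hxy) as (Hst & EX & EY).
  destruct (inverse_partials _ _ Hst) as (_ & _ & E21 & E22).
  rewrite EX, EY in E21, E22. split; assumption.
Qed.

Lemma jac_C1 : is_C1_on Strip (jac X Y) (d1 (jac X Y)) (d2 (jac X Y)).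
Proof.
  exact (is_C1_on_Derive _ _ _ _ (strip_open eps)
    (is_C1_on_minus _ _ _ _ _ _ _
      (is_C1_on_mult _ _ _ _ _ _ _ (is_C1_on_d1 _ _ HX) (is_C1_on_d2 _ _ HY))
      (is_C1_on_mult _ _ _ _ _ _ _ (is_C1_on_d2 _ _ HX) (is_C1_on_d1 _ _ HY)))).
Qed.

Lemma speed_C1 : is_C1_on Strip (speed X Y) (speed_d1 X Y) (speed_d2 X Y).
Proof.
  assert (Hsq := is_C1_on_plus _ _ _ _ _ _ _
    (is_C1_on_mult _ _ _ _ _ _ _ (is_C1_on_d1 _ _ HX) (is_C1_on_d1 _ _ HX))
    (is_C1_on_mult _ _ _ _ _ _ _ (is_C1_on_d1 _ _ HY) (is_C1_on_d1 _ _ HY))).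
  assert (Hpos : forall s t, Strip s t -> 0 < d1 X s t * d1 X s t + d1 Y s t * d1 Y s t).
  { intros s t Hst.
    pose proof (sum_sq_pos_of_det_pos _ (d2 X s t) _ (d2 Y s t) (Hjac s t Hst)). lra. }
  refine (is_C1_on_ext _ _ _ _ _ _ _ (strip_open eps) _ (is_C1_on_sqrt _ _ _ _ Hsq Hpos)).
  intros s t Hst. assert (Hl := speed_pos s t Hst). unfold speed_d1, speed_d2, speed in *.
  replace (d1 X s t * d1 X s t + d1 Y s t * d1 Y s t) with (d1 X s t ^ 2 + d1 Y s t ^ 2) by ring.
  split; [reflexivity | split; field; lra].
Qed.

Lemma varphi_C1 : is_C1_on Strip (varphi X Y)
  (quotient_partial (jac X Y) (d1 (jac X Y)) (speed X Y) (speed_d1 X Y))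
  (quotient_partial (jac X Y) (d2 (jac X Y)) (speed X Y) (speed_d2 X Y)).
Proof.
  apply (is_C1_on_div _ _ _ _ _ _ _ jac_C1 speed_C1).
  intros s t Hst. apply Rgt_not_eq, speed_pos, Hst.
Qed.

Lemma inv_jac21_C1 : is_C1_on Strip (inv_jac21 X Y)
  (quotient_partial (fun s t => - d1 Y s t) (fun s t => - d1 (d1 Y) s t) (jac X Y) (d1 (jac X Y)))
  (quotient_partial (fun s t => - d1 Y s t) (fun s t => - d2 (d1 Y) s t) (jac X Y) (d2 (jac X Y))).
Proof.
  exact (is_C1_on_div _ _ _ _ _ _ _ (is_C1_on_opp _ _ _ _ (is_C1_on_d1 _ _ HY)) jac_C1 jac_neq0).
Qed.

Lemma inv_jac22_C1 : is_C1_on Strip (inv_jac22 X Y)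
  (quotient_partial (d1 X) (d1 (d1 X)) (jac X Y) (d1 (jac X Y)))
  (quotient_partial (d1 X) (d2 (d1 X)) (jac X Y) (d2 (jac X Y))).
Proof. apply (is_C1_on_div _ _ _ _ _ _ _ (is_C1_on_d1 _ _ HX) jac_C1 jac_neq0). Qed.

Lemma dvarphi_ds_formula s t : Strip s t ->
  dvarphi_ds X Y S T s t =
    (d1 (varphi X Y) s t * inv_jac11 X Y s t + d2 (varphi X Y) s t * inv_jac21 X Y s t)
      * N1 X Y s t +
    (d1 (varphi X Y) s t * inv_jac12 X Y s t + d2 (varphi X Y) s t * inv_jac22 X Y s t)
      * N2 X Y s t.
Proof.
  intros Hst. unfold dvarphi_ds; cbv zeta.
  apply (Derive_along_line (fun x y => varphi X Y (S x y) (T x y))), pullback_differentiable;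
    [|exact Hst].
  exact (C1_on_of_is_C1_on _ _ _ _ (strip_open eps) varphi_C1).
Qed.

Lemma kappa_formula s t : Strip s t ->
  kappa X Y s t = (d1 X s t * d1 (d1 Y) s t - d1 Y s t * d1 (d1 X) s t) / speed X Y s t ^ 3.
Proof.
  intros Hst. assert (Hl := speed_pos s t Hst).
  assert (nz : forall s t, Strip s t -> speed X Y s t <> 0)
    by (intros u v Huv; apply Rgt_not_eq, speed_pos, Huv).
  destruct (is_C1_on_div _ _ _ _ _ _ _ (is_C1_on_d1 _ _ HX) speed_C1 nz s t Hst) as (T1s & _).
  destruct (is_C1_on_div _ _ _ _ _ _ _ (is_C1_on_d1 _ _ HY) speed_C1 nz s t Hst) as (T2s & _).
  unfold kappa.
  replace (Derive (fun u => T1 X Y u t) s)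
    with (quotient_partial (d1 X) (d1 (d1 X)) (speed X Y) (speed_d1 X Y) s t)
    by (symmetry; apply is_derive_unique, T1s).
  replace (Derive (fun u => T2 X Y u t) s)
    with (quotient_partial (d1 Y) (d1 (d1 Y)) (speed X Y) (speed_d1 X Y) s t)
    by (symmetry; apply is_derive_unique, T2s).
  unfold quotient_partial, N1, N2, speed_d1. field. lra.
Qed.

Lemma laplacian_T_Phi s t : Strip s t ->
  d1 (d1 T) (X s t) (Y s t) + d2 (d2 T) (X s t) (Y s t) =
    (d1 (inv_jac21 X Y) s t * inv_jac11 X Y s t + d2 (inv_jac21 X Y) s t * inv_jac21 X Y s t) +
    (d1 (inv_jac22 X Y) s t * inv_jac12 X Y s t + d2 (inv_jac22 X Y) s t * inv_jac22 X Y s t).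
Proof.
  intros Hst.
  assert (Loc := open_2d_locally _ _ _ _ Omega_open (Omega_Phi s t Hst) grad_T_Omega).
  destruct (differentiable_pt_lim_unique _ _ _ _ _ (pullback_differentiable _ s t
    (C1_on_of_is_C1_on _ _ _ _ (strip_open eps) inv_jac21_C1) Hst)) as [E21 _].
  destruct (differentiable_pt_lim_unique _ _ _ _ _ (pullback_differentiable _ s t
    (C1_on_of_is_C1_on _ _ _ _ (strip_open eps) inv_jac22_C1) Hst)) as [_ E22].
  rewrite <- E21, <- E22. unfold d1 at 1, d2 at 1. f_equal; apply Derive_ext_loc.
  - exact (locally_2d_1d_const_y _ _ _ (locally_2d_impl _ _ _ _
      (locally_2d_forall _ _ _ (fun u v H => proj1 H)) Loc)).
  - exact (locally_2d_1d_const_x _ _ _ (locally_2d_impl _ _ _ _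
      (locally_2d_forall _ _ _ (fun u v H => proj2 H)) Loc)).
Qed.

Lemma speed_sq s t : speed X Y s t ^ 2 = d1 X s t ^ 2 + d1 Y s t ^ 2.
Proof.
  unfold speed. rewrite pow2_sqrt; [reflexivity|].
  pose proof (pow2_ge_0 (d1 X s t)). pose proof (pow2_ge_0 (d1 Y s t)). lra.
Qed.

Lemma curvature_term_formula s t : Strip s t ->
  let a := d1 X s t in let b := d2 X s t in let c := d1 Y s t in let d := d2 Y s t in
  let J := jac X Y s t in let l := speed X Y s t in
  curvature_term X Y S T s t =
    (d2 (jac X Y) s t * (a ^ 2 + c ^ 2) - d1 (jac X Y) s t * (a * b + c * d)) / (J * l ^ 2) +
    ((a * d1 (d1 X) s t + c * d1 (d1 Y) s t) * (a * b + c * d)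
      - (a * d2 (d1 X) s t + c * d2 (d1 Y) s t) * (a ^ 2 + c ^ 2)
      + J * (a * d1 (d1 Y) s t - c * d1 (d1 X) s t)) / (l ^ 2) ^ 2.
Proof.
  intros Hst; cbv zeta.
  assert (Hl := speed_pos s t Hst). assert (HJ := jac_neq0 s t Hst).
  destruct (is_C1_on_partials _ _ _ _ _ _ varphi_C1 Hst) as [Es Et].
  unfold curvature_term. rewrite dvarphi_ds_formula, kappa_formula, Es, Et by exact Hst.
  unfold quotient_partial, speed_d1, speed_d2, inv_jac11, inv_jac12, inv_jac21, inv_jac22,
    N1, N2, varphi.
  field. split; lra.
Qed.

Lemma laplacian_T_formula s t : Strip s t ->
  let a := d1 X s t in let b := d2 X s t in let c := d1 Y s t in let d := d2 Y s t in
  let J := jac X Y s t in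
  d1 (d1 T) (X s t) (Y s t) + d2 (d2 T) (X s t) (Y s t) =
    (d1 (jac X Y) s t * (a * b + c * d) - d2 (jac X Y) s t * (a ^ 2 + c ^ 2)) / J ^ 3 +
    (a * d2 (d1 X) s t + c * d2 (d1 Y) s t - b * d1 (d1 X) s t - d * d1 (d1 Y) s t) / J ^ 2.
Proof.
  intros Hst; cbv zeta. assert (HJ := jac_neq0 s t Hst).
  destruct (is_C1_on_partials _ _ _ _ _ _ inv_jac21_C1 Hst) as [E1 E2].
  destruct (is_C1_on_partials _ _ _ _ _ _ inv_jac22_C1 Hst) as [E3 E4].
  rewrite laplacian_T_Phi, E1, E2, E3, E4 by exact Hst.
  unfold quotient_partial, inv_jac11, inv_jac12, inv_jac21, inv_jac22.
  field. exact HJ.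
Qed.

Lemma grad_T_sq_Phi s t : Strip s t ->
  d1 T (X s t) (Y s t) ^ 2 + d2 T (X s t) (Y s t) ^ 2 =
    (d1 X s t ^ 2 + d1 Y s t ^ 2) / jac X Y s t ^ 2.
Proof.
  intros Hst. destruct (inverse_partials s t Hst) as (_ & _ & -> & ->).
  unfold inv_jac21, inv_jac22. field. exact (jac_neq0 s t Hst).
Qed.

Lemma laplacian_T_curvature s t : Strip s t ->
  d1 (d1 T) (X s t) (Y s t) + d2 (d2 T) (X s t) (Y s t) =
  - curvature_term X Y S T s t * (d1 T (X s t) (Y s t) ^ 2 + d2 T (X s t) (Y s t) ^ 2).
Proof.
  intros Hst. assert (HJ := jac_neq0 s t Hst).
  assert (HQ := sum_sq_pos_of_det_pos _ (d2 X s t) _ (d2 Y s t) (Hjac s t Hst)).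
  rewrite laplacian_T_formula, grad_T_sq_Phi, curvature_term_formula, speed_sq by exact Hst.
  cbv zeta. unfold jac in *. field. split; lra.
Qed.

Lemma grad_T_sq_pos x y : Omega x y -> 0 < d1 T x y ^ 2 + d2 T x y ^ 2.
Proof.
  intros Hxy. destruct (HPhi_ST x y Hxy) as (Hst & EX & EY).
  assert (E := grad_T_sq_Phi _ _ Hst). rewrite EX, EY in E. rewrite E.
  apply Rdiv_lt_0_compat; [exact (sum_sq_pos_of_det_pos _ (d2 X _ _) _ (d2 Y _ _) (Hjac _ _ Hst))|].
  apply pow2_gt_0, jac_neq0, Hst.
Qed.

Lemma curvature_term_ratio s t : Strip s t ->
  curvature_term X Y S T s t = laplace_ratio T (X s t) (Y s t).
Proof.
  intros Hst. assert (Hg := grad_T_sq_pos _ _ (Omega_Phi s t Hst)).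
  unfold laplace_ratio. rewrite laplacian_T_curvature by exact Hst. field. lra.
Qed.

Lemma level_curves_comp (h : R -> R) :
  (forall a b, -eps < a < eps -> -eps < b < eps -> h a = h b -> a = b) ->
  level_curves_are eps X Y (fun x y => h (T x y)).
Proof.
  intros Hinj A. split.
  - intros (c & (x0 & y0 & H0 & E0) & HA).
    destruct (HPhi_ST x0 y0 H0) as (Ht0 & _).
    exists (T x0 y0). split; [exact Ht0|]. intros x y. rewrite HA. split.
    + intros [Hxy Ec]. exists (S x y). destruct (HPhi_ST x y Hxy) as (Hst & EX & EY).
      replace (T x0 y0) with (T x y); [split; assumption|].
      apply Hinj; [exact Hst | exact Ht0 | congruence].
    + intros (s & <- & <-). split; [exact (Omega_Phi s _ Ht0)|].
      rewrite (proj2 (HST_Phi s _ Ht0)). exact E0.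
  - intros (t & Ht & HA). exists (h t). split.
    + exists (X 0 t), (Y 0 t). split; [exact (Omega_Phi 0 t Ht)|].
      rewrite (proj2 (HST_Phi 0 t Ht)). reflexivity.
    + intros x y. rewrite HA. split.
      * intros (s & <- & <-). split; [exact (Omega_Phi s t Ht)|].
        rewrite (proj2 (HST_Phi s t Ht)). reflexivity.
      * intros [Hxy Ec]. exists (S x y). destruct (HPhi_ST x y Hxy) as (Hst & EX & EY).
        replace t with (T x y); [split; assumption|].
        apply Hinj; [exact Hst | exact Ht | exact Ec].
Qed.

Lemma level_function_factor U : level_curves_are eps X Y U ->
  forall x y, Omega x y -> U x y = U (X 0 (T x y)) (Y 0 (T x y)).
Proof.
  intros Hlev x y Hxy. destruct (HPhi_ST x y Hxy) as (Hst & EX & EY).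
  rewrite <- (level_curves_constant _ _ _ _ Hlev (T x y) Hst (S x y)), EX, EY. reflexivity.
Qed.

Lemma twice_derivable_along_Phi U s v : C2_on Omega U -> Strip s v ->
  is_derive (fun w => U (X s w) (Y s w)) v
    (d1 U (X s v) (Y s v) * d2 X s v + d2 U (X s v) (Y s v) * d2 Y s v) /\
  ex_derive (fun w => d1 U (X s w) (Y s w) * d2 X s w + d2 U (X s w) (Y s w) * d2 Y s w) v.
Proof.
  intros HU Hsv.
  split; [exact (proj2 (is_derive_along_Phi _ _ _ s v (is_C1_on_of_C1_on _ _ (proj1 HU)) Hsv))|].
  destruct (is_derive_along_Phi _ _ _ s v (is_C1_on_d1 _ _ HU) Hsv) as [_ DUx].
  destruct (is_derive_along_Phi _ _ _ s v (is_C1_on_d2 _ _ HU) Hsv) as [_ DUy].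
  destruct (is_C1_on_d2 _ _ HX s v Hsv) as (_ & DXt & _).
  destruct (is_C1_on_d2 _ _ HY s v Hsv) as (_ & DYt & _).
  eexists. apply (is_derive_plus (fun w => d1 U (X s w) (Y s w) * d2 X s w)
                                 (fun w => d2 U (X s w) (Y s w) * d2 Y s w));
    apply is_derive_Rmult; eassumption.
Qed.

Lemma curvature_term_constant_of_harmonic U :
  harmonic_on Omega U -> no_critical_point_on Omega U -> level_curves_are eps X Y U ->
  forall t, -eps < t < eps -> forall s1 s2,
    curvature_term X Y S T s1 t = curvature_term X Y S T s2 t.
Proof.
  intros [HU Hlap] Hcrit Hlev t Ht.
  set (f := fun v => U (X 0 v) (Y 0 v)).
  set (f' := fun v => d1 U (X 0 v) (Y 0 v) * d2 X 0 v + d2 U (X 0 v) (Y 0 v) * d2 Y 0 v).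
  assert (Hh : forall x y, Omega x y ->
            is_derive f (T x y) (f' (T x y)) /\ is_derive f' (T x y) (Derive f' (T x y))).
  { intros x y Hxy.
    destruct (twice_derivable_along_Phi U 0 (T x y) HU (proj1 (HPhi_ST x y Hxy))) as [Hd Hex].
    split; [exact Hd | exact (Derive_correct _ _ Hex)]. }
  set (fT := fun x y => f (T x y)).
  assert (Hfac : forall x y, Omega x y -> U x y = fT x y) by exact (level_function_factor U Hlev).
  assert (key : forall s, curvature_term X Y S T s t = Derive f' t / f' t).
  { intros s. assert (Hst : Strip s t) by exact Ht.
    assert (Hxy := Omega_Phi s t Hst). destruct (HST_Phi s t Hst) as [_ ET].
    assert (Hg := grad_T_sq_pos _ _ Hxy).
    assert (Hf'0 : f' t <> 0).
    { intros Z. apply (Hcrit _ _ Hxy).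
      destruct (d1_d2_ext_open _ _ _ Omega_open Hfac _ _ Hxy) as [-> ->].
      rewrite (d1_comp _ _ _ _ _ HT Hh), (d2_comp _ _ _ _ _ HT Hh), ET, Z by exact Hxy.
      split; ring. }
    assert (L := laplacian_comp _ _ _ _ _ HT Hh _ _ Omega_open Hxy). fold fT in L.
    rewrite <- (laplacian_ext_open _ _ _ Omega_open Hfac _ _ Hxy), Hlap, laplacian_T_curvature, ET
      in L by assumption.
    apply (Rmult_eq_reg_r (f' t)); [|exact Hf'0].
    field_simplify; [|exact Hf'0]. nra. }
  intros s1 s2. rewrite !key. reflexivity.
Qed.

Lemma laplace_ratio_along_Phi_continuous s t : Strip s t ->
  continuity_pt (fun v => laplace_ratio T (X s v) (Y s v)) t.
Proof.
  intros Hst. assert (Hxy := Omega_Phi s t Hst). assert (Hg := grad_T_sq_pos _ _ Hxy).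
  destruct (is_C1_on_of_C1_on _ _ (proj1 HX) s t Hst) as (_ & DX & _).
  destruct (is_C1_on_of_C1_on _ _ (proj1 HY) s t Hst) as (_ & DY & _).
  apply (continuity_pt_comp_2d (laplace_ratio T));
    [| exact (is_derive_continuity_pt _ _ _ DX) | exact (is_derive_continuity_pt _ _ _ DY)].
  destruct (is_C1_on_of_C1_on _ _ (proj1 HT) _ _ Hxy) as (_ & _ & _ & C1 & C2).
  destruct (is_C1_on_d1 _ _ HT _ _ Hxy) as (_ & _ & _ & C11 & _).
  destruct (is_C1_on_d2 _ _ HT _ _ Hxy) as (_ & _ & _ & _ & C22).
  unfold laplace_ratio, Rdiv. simpl in *. continuity_2d. lra.
Qed.

Lemma harmonic_of_curvature_term_constant :
  (forall t, -eps < t < eps -> forall s1 s2,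
     curvature_term X Y S T s1 t = curvature_term X Y S T s2 t) ->
  exists U, harmonic_on Omega U /\ no_critical_point_on Omega U /\ level_curves_are eps X Y U.
Proof.
  intros Hconst.
  set (g := fun t => laplace_ratio T (X 0 t) (Y 0 t)).
  assert (Hg : forall x y, Omega x y -> laplace_ratio T x y = g (T x y)).
  { intros x y Hxy. destruct (HPhi_ST x y Hxy) as (Hst & EX & EY). unfold g.
    rewrite <- (curvature_term_ratio 0 _ Hst), <- (Hconst _ Hst (S x y)), curvature_term_ratio,
      EX, EY by exact Hst.
    reflexivity. }
  destruct (exists_increasing_solution g eps (laplace_ratio_along_Phi_continuous 0))
    as (h & h' & Hsol).
  assert (Hh : forall x y, Omega x y ->
            is_derive h (T x y) (h' (T x y)) /\ is_derive h' (T x y) (h' (T x y) * g (T x y))).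
  { intros x y Hxy. destruct (Hsol _ (proj1 (HPhi_ST x y Hxy))) as (H1 & H2 & _).
    split; assumption. }
  exists (fun x y => h (T x y)). split; [split|split].
  - apply (C2_on_comp _ _ _ _ (fun v => h' v * g v) HT Hh Omega_open).
    intros x y Hxy. destruct (HPhi_ST x y Hxy) as (Hst & _). destruct (Hsol _ Hst) as (_ & H2 & _).
    exact (continuity_pt_mult _ _ _ (is_derive_continuity_pt _ _ _ H2)
             (laplace_ratio_along_Phi_continuous 0 _ Hst)).
  - intros x y Hxy. assert (Hgr := grad_T_sq_pos x y Hxy).
    rewrite (laplacian_comp _ _ _ _ (fun v => h' v * g v) HT Hh _ _ Omega_open Hxy).
    replace (d1 (d1 T) x y + d2 (d2 T) x y) with (- g (T x y) * (d1 T x y ^ 2 + d2 T x y ^ 2))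
      by (rewrite <- (Hg x y Hxy); unfold laplace_ratio; field; lra).
    ring.
  - intros x y Hxy [Z1 Z2]. assert (Hgr := grad_T_sq_pos x y Hxy).
    destruct (Hsol _ (proj1 (HPhi_ST x y Hxy))) as (_ & _ & Hp).
    rewrite (d1_comp _ _ _ _ (fun v => h' v * g v) HT Hh _ _ Hxy) in Z1.
    rewrite (d2_comp _ _ _ _ (fun v => h' v * g v) HT Hh _ _ Hxy) in Z2.
    apply Rmult_integral in Z1, Z2.
    destruct Z1 as [Z1|Z1]; [lra|]. destruct Z2 as [Z2|Z2]; [lra|].
    rewrite Z1, Z2 in Hgr. lra.
  - apply level_curves_comp, (injective_of_derive_pos h h' eps).
    intros t Ht. destruct (Hsol t Ht) as (H1 & _ & H3). split; assumption.
Qed.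

End Diffeomorphism.

Theorem theorem1 (eps : R) (X Y S T : R -> R -> R) :
  0 < eps ->
  orient_C2_diffeo eps X Y S T ->
  (exists U : R -> R -> R,
      harmonic_on (image_Phi eps X Y) U /\
      no_critical_point_on (image_Phi eps X Y) U /\
      level_curves_are eps X Y U)
  <->
  (forall t, -eps < t < eps -> forall sg1 sg2,
      dvarphi_ds X Y S T sg1 t + kappa X Y sg1 t * varphi X Y sg1 t
      = dvarphi_ds X Y S T sg2 t + kappa X Y sg2 t * varphi X Y sg2 t).
Proof.
  intros _ (HX & HY & HS & HT & HST & HPST & Hjac). split.
  - intros (U & Hharm & Hcrit & Hlev).
    apply (curvature_term_constant_of_harmonic eps X Y S T) with (U := U); assumption.
  - apply (harmonic_of_curvature_term_constant eps X Y S T); assumption.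
Qed.
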